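(* If two varieties $\mathsf V$ and $\mathsf W$ are equivalent, then for every cardinal $\kappa\le\omega$ (with $\kappa\ge 1$) the e-generalization $\kappa$-type of $\mathsf V$ equals the e-generalization $\kappa$-type of $\mathsf W$.
   Context: Two varieties $\mathsf V,\mathsf W$ (viewed as categories with algebras as objects and homomorphisms as morphisms) are equivalent if there is a categorical equivalence $\Gamma:\mathsf V\to\mathsf W$ that preserves free algebras, i.e. $\Gamma(\mathbf F_{\mathsf V}(X))=\mathbf F_{\mathsf W}(X)$ for all sets $X$. For a variety $\mathsf V$: a symbolic e-generalization problem is a finite multiset $\{t_1,\dots,t_m\}$ of terms (elements of a free algebra $\mathbf F_{\mathsf V}(X)$, $X$ finite); a solution is a term $s\in\mathbf F_{\mathsf V}(Y)$ ($Y$ the variables of $s$) such that there are substitutions (homomorphisms between free algebras) $\sigma_k$ with $\sigma_k(s)=t_k$ for all $k$; $s\preceq u$ iff $\sigma(u)=s$ for some substitution $\sigma$. In a poset a minimal complete set is a set $M$ of pairwise incomparable elements such that every element lies above some element of $M$. The type of a problem is unitary/finitary/infinitary/nullary according to whether its poset of solutions (modulo $\preceq$-equivalence) has a minimal complete set of cardinality 1 / of finite cardinality $>1$ / of infinite cardinality / has none. The e-generalization $\kappa$-type of $\mathsf V$ is the worst type (order: unitary $>$ finitary $>$ infinitary $>$ nullary) among its problems with at most $\kappa$ terms ($\kappa=\omega$: all finite problems). *)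

From mathcomp Require Import all_boot.
From Stdlib Require Import ClassicalEpsilon.

Set Implicit Arguments.
Unset Strict Implicit.
Unset Printing Implicit Defensive.

Record signature := Signature { op_sym : Type; arity : op_sym -> nat }.

Record algebra (S : signature) := Algebra {
  carrier :> Type;
  interp : forall o : op_sym S, ('I_(arity o) -> carrier) -> carrier }.

Inductive term (S : signature) (X : Type) : Type :=
| Var : X -> term S X
| App : forall o : op_sym S, ('I_(arity o) -> term S X) -> term S X.

Fixpoint eval (S : signature) (X : Type) (A : algebra S) (v : X -> A)
  (t : term S X) : A :=
  match t with
  | Var x => v x
  | App o ts => @interp S A o (fun i => eval v (ts i))
  end.

(* A variety: a signature together with a set of defining equations
   (by Birkhoff's theorem, equivalently an HSP-closed class). *)
Record variety := Variety {
  vsig : signature;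
  veqs : term vsig nat -> term vsig nat -> Prop }.

Definition models (V : variety) (A : algebra (vsig V)) : Prop :=
  forall l r, @veqs V l r -> forall v : nat -> A, eval v l = eval v r.

Record valg (V : variety) := VAlg {
  valg_alg :> algebra (vsig V);
  valg_models : models valg_alg }.

Record hom (S : signature) (A B : algebra S) := Hom {
  hfun :> A -> B;
  hfun_ops : forall (o : op_sym S) (args : 'I_(arity o) -> A),
      hfun (@interp S A o args) = @interp S B o (fun i => hfun (args i)) }.

Definition hom_eq (S : signature) (A B : algebra S) (f g : hom A B) : Prop :=
  forall x, f x = g x.

Definition hom_id (S : signature) (A : algebra S) : hom A A :=
  @Hom S A A (fun x => x) (fun o args => erefl).

Lemma hom_comp_ops (S : signature) (A B C : algebra S) (g : hom B C) (f : hom A B) :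
  forall (o : op_sym S) (args : 'I_(arity o) -> A),
    g (f (@interp S A o args)) = @interp S C o (fun i => g (f (args i))).
Proof. by move=> o args; rewrite (hfun_ops f) (hfun_ops g). Qed.

Definition hom_comp (S : signature) (A B C : algebra S) (g : hom B C) (f : hom A B)
  : hom A C := @Hom S A C (fun x => g (f x)) (hom_comp_ops g f).

Definition is_iso (S : signature) (A B : algebra S) : Prop :=
  exists (f : hom A B) (g : hom B A),
    (forall x, g (f x) = x) /\ (forall y, f (g y) = y).

Definition is_free (V : variety) (X : Type) (F : valg V) (eta : X -> F) : Prop :=
  forall (A : valg V) (f : X -> A),
    exists h : hom F A,
      (forall x, h (eta x) = f x) /\
      (forall h' : hom F A, (forall x, h' (eta x) = f x) -> hom_eq h' h).

Record functor (V W : variety) := Functor {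
  fobj : valg V -> valg W;
  fmap : forall A B : valg V, hom A B -> hom (fobj A) (fobj B);
  fmap_ext : forall (A B : valg V) (f g : hom A B),
      hom_eq f g -> hom_eq (fmap f) (fmap g);
  fmap_id : forall A : valg V, hom_eq (fmap (hom_id A)) (hom_id (fobj A));
  fmap_comp : forall (A B C : valg V) (f : hom A B) (g : hom B C),
      hom_eq (fmap (hom_comp g f)) (hom_comp (fmap g) (fmap f)) }.

Definition full (V W : variety) (G : functor V W) : Prop :=
  forall (A B : valg V) (h : hom (fobj G A) (fobj G B)),
    exists f : hom A B, hom_eq (fmap G f) h.

Definition faithful (V W : variety) (G : functor V W) : Prop :=
  forall (A B : valg V) (f g : hom A B),
    hom_eq (fmap G f) (fmap G g) -> hom_eq f g.

Definition ess_surj (V W : variety) (G : functor V W) : Prop :=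
  forall B : valg W, exists A : valg V, is_iso (fobj G A) B.

(* Gamma(F_V(X)) = F_W(X): the image of a free V-algebra over X is a free
   W-algebra over X (i.e. is F_W(X) up to isomorphism). *)
Definition preserves_free (V W : variety) (G : functor V W) : Prop :=
  forall (X : Type) (F : valg V) (eta : X -> F),
    is_free eta -> exists eta' : X -> fobj G F, is_free eta'.

Definition equivalent_varieties (V W : variety) : Prop :=
  exists G : functor V W, [/\ full G, faithful G, ess_surj G & preserves_free G].

(* A problem: a finite multiset (list) of terms, i.e. elements of a free
   algebra F_V(X) with X finite (X = 'I_n). *)
Record problem (V : variety) := Problem {
  pb_n : nat;
  pb_F : valg V;
  pb_eta : 'I_pb_n -> pb_F;
  pb_free : is_free pb_eta;
  pb_terms : seq pb_F }.

Record gen (V : variety) := Gen {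
  g_n : nat;
  g_F : valg V;
  g_eta : 'I_g_n -> g_F;
  g_free : is_free g_eta;
  g_s : g_F }.

Definition is_solution (V : variety) (P : problem V) (s : gen V) : Prop :=
  forall t, List.In t (pb_terms P) ->
    exists sigma : hom (g_F s) (pb_F P), sigma (g_s s) = t.

Definition gen_le (V : variety) (s u : gen V) : Prop :=
  exists sigma : hom (g_F u) (g_F s), sigma (g_s u) = g_s s.

Definition mcs (V : variety) (P : problem V) (M : gen V -> Prop) : Prop :=
  [/\ (forall s, M s -> is_solution P s),
      (forall s u, M s -> M u -> s <> u -> ~ gen_le s u /\ ~ gen_le u s)
    & (forall u, is_solution P u -> exists2 s, M s & gen_le s u)].

Definition finite_set (T : Type) (M : T -> Prop) : Prop :=
  exists l : seq T, forall x, M x -> List.In x l.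

Inductive etype := Nullary | Infinitary | Finitary | Unitary.

Definition is_unitary V (P : problem V) : Prop :=
  exists M, mcs P M /\ exists s, M s /\ forall u, M u -> u = s.
Definition is_finitary V (P : problem V) : Prop :=
  exists M, mcs P M /\ finite_set M /\ exists s u, [/\ M s, M u & s <> u].
Definition is_infinitary V (P : problem V) : Prop :=
  exists M, mcs P M /\ ~ finite_set M.

Definition problem_type V (P : problem V) : etype :=
  if excluded_middle_informative (is_unitary P) then Unitary
  else if excluded_middle_informative (is_finitary P) then Finitary
  else if excluded_middle_informative (is_infinitary P) then Infinitary
  else Nullary.

Inductive kappa := KFin of nat | KOmega.

Definition kappa_ge1 (k : kappa) : Prop :=
  match k with KFin n => 1 <= n | KOmega => True end.

Definition admissible (k : kappa) V (P : problem V) : Prop :=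
  1 <= size (pb_terms P) /\
  match k with KFin n => size (pb_terms P) <= n | KOmega => True end.

(* The worst type (nullary < infinitary < finitary < unitary) among
   problems with at most kappa terms. *)
Definition ktype (V : variety) (k : kappa) : etype :=
  let has t := exists P : problem V, admissible k P /\ problem_type P = t in
  if excluded_middle_informative (has Nullary) then Nullary
  else if excluded_middle_informative (has Infinitary) then Infinitary
  else if excluded_middle_informative (has Finitary) then Finitary
  else Unitary.

From mathcomp Require Import all_boot.
From Stdlib Require Import ClassicalEpsilon PropExtensionality.
From Stdlib Require Import FunctionalExtensionality ProofIrrelevance.

Set Implicit Arguments.
Unset Strict Implicit.
Unset Printing Implicit Defensive.

(* Elements of a V-algebra A are the homomorphisms F_V(1) -> A.  A full and
   faithful functor G sending free algebras to free algebras therefore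
   identifies them, up to the isomorphism G F_V(1) = F_W(1), with the elements
   of G A, and b is a homomorphic image of a iff the same holds for their
   images in W.  Consequently every generalization problem of V has a
   counterpart of the same size in W, and conversely, whose solutions
   correspond to those of the original problem in a way that preserves and
   reflects the instance preorder.  Such a correspondence, total in both
   directions, carries a minimal complete set (one chosen partner per
   element) to a minimal complete set of the same cardinality, so
   corresponding problems have the same type. *)

Definition image_pred (T T' : Type) (f : T -> T') (M : T -> Prop) : T' -> Prop :=
  fun y => exists2 x, M x & y = f x.

Lemma finite_set_image (T T' : Type) (f : T -> T') (M : T -> Prop) :
  finite_set M -> finite_set (image_pred f M).
Proof. by case=> l Hl; exists (List.map f l) => _ [x Mx ->]; exact/List.in_map/Hl. Qed.

Lemma finite_set_of_image (T T' : Type) (f : T -> T') (M : T -> Prop) :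
  (forall x y, M x -> M y -> f x = f y -> x = y) ->
  finite_set (image_pred f M) -> finite_set M.
Proof.
move=> f_inj [l Hl]; have [[x0 _]|M0] := classic (exists x, M x); last first.
  by exists [::] => x Mx; case: M0; exists x.
pose g y := epsilon (inhabits x0) (fun x => M x /\ f x = y).
exists (List.map g l) => x Mx.
have [Mgx Egx] : M (g (f x)) /\ f (g (f x)) = f x.
  exact: (epsilon_spec _ (fun z => M z /\ f z = f x) (ex_intro _ x (conj Mx erefl))).
by rewrite -(f_inj _ _ Mgx Mx Egx); apply/List.in_map/Hl; exists x.
Qed.

Lemma Forall2_size (A B : Type) (R : A -> B -> Prop) l l' :
  List.Forall2 R l l' -> size l = size l'.
Proof. by elim=> //= x y l1 l1' _ _ ->. Qed.

Lemma Forall2_total_r (A B : Type) (R : A -> B -> Prop) :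
  (forall y, exists x, R x y) -> forall l', exists l, List.Forall2 R l l'.
Proof.
move=> R_total; elim=> [|y l' [l Rl]]; first by exists [::].
by have [x Rxy] := R_total y; exists (x :: l); constructor.
Qed.

Lemma Forall2_total_l (A B : Type) (R : A -> B -> Prop) :
  (forall x, exists y, R x y) -> forall l, exists l', List.Forall2 R l l'.
Proof.
move=> R_total l; have [l' Rl] := @Forall2_total_r B A (fun y x => R x y) R_total l.
by exists l'; apply: List.Forall2_flip Rl.
Qed.

Lemma Forall2_all_iff (A B : Type) (R : A -> B -> Prop) (p : A -> Prop) (q : B -> Prop) l l' :
  (forall x y, R x y -> (p x <-> q y)) -> List.Forall2 R l l' ->
  (forall x, List.In x l -> p x) <-> (forall y, List.In y l' -> q y).
Proof.
move=> Rpq; elim=> [|x y l1 l1' Rxy _ IH] /=; first by split=> _ ? [].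
split=> H w [<-|w_in].
- by apply/(Rpq _ _ Rxy)/H; left.
- by apply: (proj1 IH) w_in => z z_in; apply: H; right.
- by apply/(Rpq _ _ Rxy)/H; left.
- by apply: (proj2 IH) w_in => z z_in; apply: H; right.
Qed.

Section MinimalCompleteSets.
Variables (T : Type) (le : T -> T -> Prop) (sol : T -> Prop).

Definition minimal_complete (M : T -> Prop) : Prop :=
  [/\ (forall s, M s -> sol s),
      (forall s u, M s -> M u -> s <> u -> ~ le s u /\ ~ le u s)
    & (forall u, sol u -> exists2 s, M s & le s u)].

Definition unitary_mcs : Prop :=
  exists M, minimal_complete M /\ exists s, M s /\ forall u, M u -> u = s.
Definition finitary_mcs : Prop :=
  exists M, minimal_complete M /\ finite_set M /\ exists s u, [/\ M s, M u & s <> u].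
Definition infinitary_mcs : Prop :=
  exists M, minimal_complete M /\ ~ finite_set M.

Definition mcs_type : etype :=
  if excluded_middle_informative unitary_mcs then Unitary
  else if excluded_middle_informative finitary_mcs then Finitary
  else if excluded_middle_informative infinitary_mcs then Infinitary
  else Nullary.

End MinimalCompleteSets.

Lemma problem_typeE (V : variety) (P : problem V) :
  problem_type P = mcs_type (@gen_le V) (is_solution P).
Proof. by []. Qed.

Record correspondence (T T' : Type) (le : T -> T -> Prop) (le' : T' -> T' -> Prop)
    (sol : T -> Prop) (sol' : T' -> Prop) (R : T -> T' -> Prop) : Prop := {
  corr_total_l : forall s, exists s', R s s';
  corr_total_r : forall s', exists s, R s s';
  corr_le : forall s s' u u', R s s' -> R u u' -> (le s u <-> le' s' u');
  corr_sol : forall s s', R s s' -> (sol s <-> sol' s') }.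

Lemma correspondence_flip T T' le le' sol sol' (R : T -> T' -> Prop) :
  correspondence le le' sol sol' R ->
  correspondence le' le sol' sol (fun s' s => R s s').
Proof.
case=> Rl Rr Rle Rsol; split=> // [s' s u' u Rs Ru|s' s Rs].
  by rewrite (Rle _ _ _ _ Rs Ru).
by rewrite (Rsol _ _ Rs).
Qed.

Section McsTransfer.
Variables (T T' : Type) (le : T -> T -> Prop) (le' : T' -> T' -> Prop).
Variables (sol : T -> Prop) (sol' : T' -> Prop) (R : T -> T' -> Prop).
Hypothesis le'_refl : forall s', le' s' s'.
Hypothesis HR : correspondence le le' sol sol' R.

Definition partner (s : T) : T' :=
  proj1_sig (constructive_indefinite_description _ (corr_total_l HR s)).

Lemma R_partner s : R s (partner s).
Proof. exact: proj2_sig (constructive_indefinite_description _ _). Qed.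

Lemma partner_inj M s u : minimal_complete le sol M -> M s -> M u ->
  partner s = partner u -> s = u.
Proof.
case=> _ M_incomp _ Ms Mu Esu; apply: NNPP => /(M_incomp _ _ Ms Mu) [+ _]; apply.
by apply/(corr_le HR (R_partner s) (R_partner u)); rewrite Esu; apply: le'_refl.
Qed.

Lemma minimal_complete_image M :
  minimal_complete le sol M -> minimal_complete le' sol' (image_pred partner M).
Proof.
case=> M_sol M_incomp M_compl; split.
- by move=> _ [s Ms ->]; apply/(corr_sol HR (R_partner s))/M_sol.
- move=> _ _ [s Ms ->] [u Mu ->] neq.
  have [nsu nus] : ~ le s u /\ ~ le u s by apply: M_incomp => // Esu; rewrite Esu in neq.
  by rewrite -!(corr_le HR (R_partner _) (R_partner _)).
- move=> u' solu'; have [u Ruu'] := corr_total_r HR u'.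
  have [s Ms le_su] := M_compl u (proj2 (corr_sol HR Ruu') solu').
  by exists (partner s); [exists s | apply/(corr_le HR (R_partner s) Ruu')].
Qed.

Lemma unitary_mcs_transfer : unitary_mcs le sol -> unitary_mcs le' sol'.
Proof.
case=> M [M_mcs [s [Ms M1]]]; exists (image_pred partner M).
split; first exact: minimal_complete_image.
by exists (partner s); split=> [|_ [u Mu ->]]; [exists s | rewrite (M1 u Mu)].
Qed.

Lemma finitary_mcs_transfer : finitary_mcs le sol -> finitary_mcs le' sol'.
Proof.
case=> M [M_mcs [M_fin [s [u [Ms Mu neq]]]]]; exists (image_pred partner M).
split; first exact: minimal_complete_image.
split; first exact: finite_set_image.
exists (partner s), (partner u); split; [by exists s | by exists u |].
by move/(partner_inj M_mcs Ms Mu).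
Qed.

Lemma infinitary_mcs_transfer : infinitary_mcs le sol -> infinitary_mcs le' sol'.
Proof.
case=> M [M_mcs M_inf]; exists (image_pred partner M).
split; first exact: minimal_complete_image.
by move/(finite_set_of_image (fun s u => partner_inj M_mcs)).
Qed.

End McsTransfer.

Lemma mcs_type_eq T T' le le' sol sol' (R : T -> T' -> Prop) :
  (forall s, le s s) -> (forall s', le' s' s') ->
  correspondence le le' sol sol' R -> mcs_type le sol = mcs_type le' sol'.
Proof.
move=> le_refl le'_refl HR; have HR' := correspondence_flip HR.
have eU : unitary_mcs le sol = unitary_mcs le' sol'.
  apply: propositional_extensionality.
  by split; [exact: unitary_mcs_transfer HR | exact: unitary_mcs_transfer HR'].
have eF : finitary_mcs le sol = finitary_mcs le' sol'.
  apply: propositional_extensionality.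
  by split; [exact: finitary_mcs_transfer le'_refl HR
            | exact: finitary_mcs_transfer le_refl HR'].
have eI : infinitary_mcs le sol = infinitary_mcs le' sol'.
  apply: propositional_extensionality.
  by split; [exact: infinitary_mcs_transfer le'_refl HR
            | exact: infinitary_mcs_transfer le_refl HR'].
by rewrite /mcs_type eU eF eI.
Qed.

Section FreeAlgebra.
Variables (V : variety) (X : Type).
Local Notation S := (vsig V).

Definition term_equiv (t u : term S X) : Prop :=
  forall (A : valg V) (v : X -> A), eval v t = eval v u.

(* An element of the free algebra is a [term_equiv]-class, represented by its
   characteristic predicate so that no quotient type is needed. *)
Definition free_carrier := {P : term S X -> Prop | exists t, P = term_equiv t}.

Definition term_class (t : term S X) : free_carrier :=
  exist _ (term_equiv t) (ex_intro _ t erefl).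

Definition class_rep (c : free_carrier) : term S X :=
  proj1_sig (constructive_indefinite_description _ (proj2_sig c)).

Lemma class_repE c : proj1_sig c = term_equiv (class_rep c).
Proof. by rewrite /class_rep; case: constructive_indefinite_description. Qed.

Lemma class_repK c : term_class (class_rep c) = c.
Proof. by case: c => P HP; apply: subset_eq_compat; rewrite -class_repE. Qed.

Lemma term_class_eq t u : term_equiv t u -> term_class t = term_class u.
Proof.
move=> Htu; apply: subset_eq_compat.
apply: functional_extensionality => w; apply: propositional_extensionality.
by split=> H A v; rewrite -H Htu.
Qed.

Lemma class_rep_equiv t : term_equiv (class_rep (term_class t)) t.
Proof.
have Htt : term_equiv t t by [].
by rewrite [term_equiv t](class_repE (term_class t)) in Htt.
Qed.

Definition free_op (o : op_sym S) (args : 'I_(arity o) -> free_carrier) :=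
  term_class (@App S X o (fun i => class_rep (args i))).

Definition free_alg : algebra S := Algebra free_op.

Lemma term_class_App o (ts : 'I_(arity o) -> term S X) :
  term_class (@App S X o ts) = @interp S free_alg o (fun i => term_class (ts i)).
Proof.
apply: term_class_eq => A v /=; congr interp.
by apply: functional_extensionality => i; rewrite (class_rep_equiv (ts i) v).
Qed.

Fixpoint subst (sg : nat -> term S X) (l : term S nat) : term S X :=
  match l with
  | Var n => sg n
  | App o ts => @App S X o (fun i => subst sg (ts i))
  end.

Lemma eval_subst (A : algebra S) (w : X -> A) sg l :
  eval w (subst sg l) = eval (fun n => eval w (sg n)) l.
Proof.
elim: l => [n|o ts IH] //=; congr interp.
exact: functional_extensionality.
Qed.

Lemma eval_free_alg (v : nat -> free_alg) l :
  eval v l = term_class (subst (fun n => class_rep (v n)) l).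
Proof.
elim: l => [n|o ts IH] /=; first by rewrite class_repK.
by rewrite term_class_App /=; congr (free_op _); apply: functional_extensionality.
Qed.

Lemma free_alg_models : models free_alg.
Proof.
move=> l r Hlr v; rewrite !eval_free_alg; apply: term_class_eq => A w.
by rewrite !eval_subst; apply: valg_models.
Qed.

Definition free_valg : valg V := VAlg free_alg_models.

Definition free_gen (x : X) : free_valg := term_class (Var S x).

Lemma free_lift_ops (A : valg V) (f : X -> A) o (args : 'I_(arity o) -> free_valg) :
  eval f (class_rep (@interp S free_valg o args))
  = @interp S A o (fun i => eval f (class_rep (args i))).
Proof. exact: class_rep_equiv. Qed.

Definition free_lift (A : valg V) (f : X -> A) : hom free_valg A :=
  @Hom S free_valg A (fun c => eval f (class_rep c)) (free_lift_ops f).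

Lemma free_lift_gen (A : valg V) (f : X -> A) x : free_lift f (free_gen x) = f x.
Proof. exact: class_rep_equiv. Qed.

Lemma free_valg_free : is_free free_gen.
Proof.
move=> A f; exists (free_lift f); split=> [|h hf c]; first exact: free_lift_gen.
have h_class t : h (term_class t) = eval f t.
  elim: t => [x|o ts IH] /=; first exact: hf.
  by rewrite term_class_App hfun_ops; congr interp; apply: functional_extensionality.
by rewrite -[c]class_repK h_class /= class_repK.
Qed.

End FreeAlgebra.

Definition subsumes (S : signature) (A B : algebra S) (a : A) (b : B) : Prop :=
  exists h : hom A B, h a = b.

Lemma subsumes_refl (S : signature) (A : algebra S) (a : A) : subsumes a a.
Proof. by exists (hom_id A). Qed.

Lemma subsumes_trans (S : signature) (A B C : algebra S) (a : A) (b : B) (c : C) :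
  subsumes a b -> subsumes b c -> subsumes a c.
Proof. by move=> [f <-] [g <-]; exists (hom_comp g f). Qed.

Lemma free_hom_ext (V : variety) (X : Type) (F : valg V) (eta : X -> F) :
  is_free eta -> forall (A : valg V) (h1 h2 : hom F A),
  (forall x, h1 (eta x) = h2 (eta x)) -> hom_eq h1 h2.
Proof.
move=> F_free A h1 h2 E; have [h [_ h_unique]] := F_free A (fun x => h2 (eta x)).
by move=> z; rewrite (h_unique h1 E z) (h_unique h2 (fun _ => erefl) z).
Qed.

Lemma free_subsumes_equiv (V : variety) (X : Type) (F F' : valg V)
    (eta : X -> F) (eta' : X -> F') :
  is_free eta -> is_free eta' ->
  forall z : F, exists z' : F', subsumes z z' /\ subsumes z' z.
Proof.
move=> F_free F'_free z.
have [i [i_eta _]] := F_free F' eta'; have [j [j_eta' _]] := F'_free F eta.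
have ji_id : hom_eq (hom_comp j i) (hom_id F).
  by apply: (free_hom_ext F_free) => x /=; rewrite i_eta j_eta'.
by exists (i z); split; [exists i | exists j; apply: ji_id].
Qed.

Section Equivalence.
Variables (V W : variety) (G : functor V W).
Hypotheses (G_full : full G) (G_faithful : faithful G) (G_free : preserves_free G).

Local Notation F1 := (free_valg V 'I_1).
Local Notation x1 := (@free_gen V 'I_1 ord0).

Definition G_gen1 : 'I_1 -> fobj G F1 :=
  proj1_sig (constructive_indefinite_description _ (G_free (@free_valg_free V 'I_1))).

Lemma G_gen1_free : is_free G_gen1.
Proof. exact: proj2_sig (constructive_indefinite_description _ _). Qed.

Definition elem_hom (A : valg V) (a : A) : hom F1 A := @free_lift V 'I_1 A (fun _ => a).

Lemma elem_hom_gen (A : valg V) (a : A) : elem_hom a x1 = a.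
Proof. exact: free_lift_gen. Qed.

Lemma elem_hom_unique (A : valg V) (a : A) (h : hom F1 A) :
  h x1 = a -> hom_eq h (elem_hom a).
Proof.
move=> h_a; apply: (free_hom_ext (@free_valg_free V 'I_1)) => i.
by rewrite (ord1 i) elem_hom_gen.
Qed.

Definition elemG (A : valg V) (a : A) : fobj G A := fmap G (elem_hom a) (G_gen1 ord0).

Lemma fmap_elemG (A B : valg V) (h : hom A B) (a : A) :
  fmap G h (elemG a) = elemG (h a).
Proof.
transitivity (fmap G (hom_comp h (elem_hom a)) (G_gen1 ord0)); first by rewrite fmap_comp.
by apply: fmap_ext; apply: elem_hom_unique; apply: (congr1 h (elem_hom_gen a)).
Qed.

Lemma subsumes_elemG (A B : valg V) (a : A) (b : B) :
  subsumes (elemG a) (elemG b) <-> subsumes a b.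
Proof.
split=> [[tau tau_ab]|[h <-]]; last by exists (fmap G h); apply: fmap_elemG.
have [f f_tau] := G_full tau; exists f.
have : hom_eq (hom_comp f (elem_hom a)) (elem_hom b).
  apply: G_faithful; apply: (free_hom_ext G_gen1_free) => i.
  by rewrite (ord1 i) fmap_comp /= f_tau.
move=> /(_ x1) fab; rewrite -(elem_hom_gen a) -(elem_hom_gen b); exact: fab.
Qed.

Lemma elemG_surj (A : valg V) (b : fobj G A) : exists a : A, elemG a = b.
Proof.
have [k [k_b _]] := @G_gen1_free (fobj G A) (fun _ => b).
have [f f_k] := G_full k; exists (f x1).
by rewrite /elemG -(fmap_ext (elem_hom_unique (h := f) erefl)) f_k k_b.
Qed.

Definition corresp (A : valg V) (B : algebra (vsig W)) (a : A) (b : B) : Prop :=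
  subsumes (elemG a) b /\ subsumes b (elemG a).

Lemma corresp_elemG (A : valg V) (a : A) : corresp a (elemG a).
Proof. by split; apply: subsumes_refl. Qed.

Lemma corresp_subsumes (A A' : valg V) (B B' : algebra (vsig W))
    (a : A) (a' : A') (b : B) (b' : B') :
  corresp a b -> corresp a' b' -> (subsumes a a' <-> subsumes b b').
Proof.
move=> [ab ba] [a'b' b'a']; rewrite -subsumes_elemG; split=> H.
- exact: subsumes_trans ba (subsumes_trans H a'b').
- exact: subsumes_trans ab (subsumes_trans H b'a').
Qed.

Lemma corresp_free n (F : valg W) (eta : 'I_n -> F) :
  is_free eta -> forall z : F, exists a : free_valg V 'I_n, corresp a z.
Proof.
move=> F_free z; have [eta' GF_free] := G_free (@free_valg_free V 'I_n).
have [z' [zz' z'z]] := free_subsumes_equiv F_free GF_free z.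
by have [a a_z'] := elemG_surj z'; exists a; rewrite /corresp a_z'.
Qed.

Definition gen_corresp (s : gen V) (s' : gen W) : Prop := corresp (g_s s) (g_s s').

Definition problem_corresp (P : problem V) (P' : problem W) : Prop :=
  List.Forall2 (fun t t' => corresp t t') (pb_terms P) (pb_terms P').

Lemma gen_correspondence (P : problem V) (P' : problem W) :
  problem_corresp P P' ->
  correspondence (@gen_le V) (@gen_le W) (is_solution P) (is_solution P') gen_corresp.
Proof.
move=> PP'; split.
- move=> s; have [eta' Gs_free] := G_free (@g_free _ s).
  by exists (@Gen W _ _ eta' Gs_free (elemG (g_s s))); apply: corresp_elemG.
- move=> s'; have [a a_s'] := corresp_free (@g_free _ s') (g_s s').
  by exists (@Gen V _ _ _ (@free_valg_free V _) a).
- by move=> s s' u u' ss' uu'; apply: corresp_subsumes.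
- by move=> s s' ss'; apply: Forall2_all_iff PP' => t t'; apply: corresp_subsumes.
Qed.

Lemma problem_type_corresp (P : problem V) (P' : problem W) :
  problem_corresp P P' -> problem_type P = problem_type P'.
Proof.
move=> PP'; rewrite !problem_typeE.
by apply: mcs_type_eq (gen_correspondence PP') => s; apply: subsumes_refl.
Qed.

Lemma admissible_corresp (k : kappa) (P : problem V) (P' : problem W) :
  problem_corresp P P' -> admissible k P = admissible k P'.
Proof. by move=> PP'; rewrite /admissible (Forall2_size PP'). Qed.

Lemma exists_problem_of_type (k : kappa) (t : etype) :
  (exists P : problem V, admissible k P /\ problem_type P = t) <->
  (exists P' : problem W, admissible k P' /\ problem_type P' = t).
Proof.
split=> [[P [P_adm <-]]|[P' [P'_adm <-]]].
- have [eta' GP_free] := G_free (@pb_free _ P).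
  have [l' Pl'] := Forall2_total_l (fun t => ex_intro _ _ (corresp_elemG t)) (pb_terms P).
  pose P' := Problem GP_free l'; have PP' : problem_corresp P P' := Pl'.
  by exists P'; rewrite -(admissible_corresp k PP') -(problem_type_corresp PP').
- have [l Pl] := Forall2_total_r (corresp_free (@pb_free _ P')) (pb_terms P').
  pose P := Problem (@free_valg_free V _) l; have PP' : problem_corresp P P' := Pl.
  by exists P; rewrite (admissible_corresp k PP') (problem_type_corresp PP').
Qed.

End Equivalence.

Theorem theorem3p8 (V W : variety) (k : kappa) :
  kappa_ge1 k -> equivalent_varieties V W -> ktype V k = ktype W k.
Proof.
move=> _ [G [G_full G_faithful _ G_free]].
have has_eq t := propositional_extensionality _ _
  (exists_problem_of_type G_full G_faithful G_free k t).
by rewrite /ktype /= !has_eq.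
Qed.
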